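(* Let $I$ be a bounded open interval containing $0$ and let $f\in C^\infty(I)$ be real-valued. For integers $k\ge 1$, $n\ge 0$ and $t\in I$ put $$f_{k,n}(t):=\frac{(-1)^n}{n!}\,t^n f^{(n+k)}(t).$$ Suppose that for some integer $k\ge1$ the sequence $(f_{k,n})_{n\ge0}$ converges uniformly on $I$. (a) If $k\ge 2$, then the series $\hat f(t)$ converges uniformly on $I$ and $\hat f(t)=f(0)$ for all $t\in I$. (b) If $k=1$, let $\check f(t):=\lim_{n\to\infty}f_{1,n}(t)$ (uniform limit on $I$). Then $\hat f$ converges uniformly on $I$, its sum is differentiable on $I$, and $\frac{d}{dt}\hat f(t)=\check f(t)$ for all $t\in I$. In particular, if $\check f\equiv 0$ on $I$ (i.e. $\frac{(-1)^n}{n!}t^nf^{(n+1)}(t)\to0$ uniformly on $I$), then $\hat f(t)=f(0)$ for all $t\in I$.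
   Context: For a smooth function $f$ on an interval containing the point $t$, $\hat f(t)$ denotes the series $\hat f(t):=\sum_{n=0}^{\infty}\frac{(-1)^n}{n!}\,t^n f^{(n)}(t)$; ''$\hat f$ converges (uniformly) on a set'' means its partial sums $\sum_{n=0}^N\frac{(-1)^n}{n!}t^nf^{(n)}(t)$ converge (uniformly) on that set, and $\hat f(t)$ also denotes the sum. *)

From Stdlib Require Import Reals Lra Lia Factorial.
Open Scope R_scope.

Definition in_I (a b t : R) : Prop := a < t < b.

(* [higher_derivs a b f F]: F n is the n-th derivative of f on the open
   interval (a,b), i.e. F 0 = f and (F n)' = F (n+1) at every point of (a,b).
   Such an F exists iff f is C^infinity on (a,b). *)
Definition higher_derivs (a b : R) (f : R -> R) (F : nat -> R -> R) : Prop :=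
  F O = f /\
  forall (n : nat) (t : R), in_I a b t -> derivable_pt_lim (F n) t (F (S n) t).

Definition unif_cv_on (fn : nat -> R -> R) (g : R -> R) (P : R -> Prop) : Prop :=
  forall eps : R, 0 < eps ->
    exists N : nat, forall (n : nat) (t : R), (n >= N)%nat -> P t ->
      Rabs (fn n t - g t) < eps.

Definition f_kn (F : nat -> R -> R) (k n : nat) (t : R) : R :=
  (-1) ^ n / INR (fact n) * t ^ n * F (n + k)%nat t.

Definition hat_partial (F : nat -> R -> R) (N : nat) (t : R) : R :=
  sum_f_R0 (fun n => (-1) ^ n / INR (fact n) * t ^ n * F n t) N.

From Stdlib Require Import Reals Lra Lia Factorial Ranalysis5 Classical IndefiniteDescription.
Open Scope R_scope.

(* Differentiating the partial sums of [hat f] telescopes: the derivative of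
   the N-th partial sum is exactly [f_{1,N}], and the derivative of
   [f_{k,n+1}] is [f_{k+1,n+1} - f_{k+1,n}].  On a bounded interval containing
   [0], where all these functions take a value independent of [n], the mean
   value theorem turns uniform convergence of derivatives into uniform
   convergence of the functions.  Hence uniform convergence of [f_{k,n}] forces
   [f_{j,n} -> 0] for [j < k], and the uniform limit of the partial sums has
   derivative [f_check], which is [0] when [k >= 2]. *)

Section UniformConvergence.

Variable P : R -> Prop.

Definition unif_cauchy_on (h : nat -> R -> R) : Prop :=
  forall eps : R, 0 < eps ->
    exists N : nat, forall (n m : nat) (t : R), (n >= N)%nat -> (m >= N)%nat ->
      P t -> Rabs (h n t - h m t) < eps.

Lemma unif_cv_on_pointwise (h : nat -> R -> R) (g : R -> R) (t : R) :
  unif_cv_on h g P -> P t -> Un_cv (fun n => h n t) (g t).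
Proof.
  intros Hcv Ht eps Heps; destruct (Hcv eps Heps) as [N HN].
  exists N; intros n Hn; apply HN; auto.
Qed.

Lemma unif_cv_on_unique (h : nat -> R -> R) (g1 g2 : R -> R) (t : R) :
  unif_cv_on h g1 P -> unif_cv_on h g2 P -> P t -> g1 t = g2 t.
Proof.
  intros H1 H2 Ht.
  apply (UL_sequence (fun n => h n t)); eapply unif_cv_on_pointwise; eauto.
Qed.

Lemma unif_cv_on_ext (h : nat -> R -> R) (g1 g2 : R -> R) :
  (forall t, P t -> g1 t = g2 t) -> unif_cv_on h g1 P -> unif_cv_on h g2 P.
Proof.
  intros Hg Hcv eps Heps; destruct (Hcv eps Heps) as [N HN].
  exists N; intros n t Hn Ht; rewrite <- Hg by exact Ht; auto.
Qed.

Lemma unif_cv_on_of_succ (h : nat -> R -> R) (g : R -> R) :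
  unif_cv_on (fun n => h (S n)) g P -> unif_cv_on h g P.
Proof.
  intros Hcv eps Heps; destruct (Hcv eps Heps) as [N HN].
  exists (S N); intros [|n] t Hn Ht; [lia|]; apply HN; auto; lia.
Qed.

Lemma unif_cv_on_cauchy (h : nat -> R -> R) (g : R -> R) :
  unif_cv_on h g P -> unif_cauchy_on h.
Proof.
  intros Hcv eps Heps; destruct (Hcv (eps / 2)) as [N HN]; [lra|].
  exists N; intros n m t Hn Hm Ht.
  specialize (HN n t Hn Ht) as Hn'; specialize (HN m t Hm Ht) as Hm'.
  replace (h n t - h m t) with ((h n t - g t) - (h m t - g t)) by ring.
  eapply Rle_lt_trans; [apply Rabs_triang|]; rewrite Rabs_Ropp; lra.
Qed.

Lemma unif_cv_on_succ_sub (h : nat -> R -> R) (g : R -> R) :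
  unif_cv_on h g P ->
  unif_cv_on (fun n t => h (S n) t - h n t) (fun _ => 0) P.
Proof.
  intros Hcv eps Heps; destruct (unif_cv_on_cauchy h g Hcv eps Heps) as [N HN].
  exists N; intros n t Hn Ht; rewrite Rminus_0_r; apply HN; auto.
Qed.

Lemma unif_cauchy_on_cv (h : nat -> R -> R) :
  unif_cauchy_on h -> exists g, unif_cv_on h g P.
Proof.
  intros Hc.
  assert (Hlim : forall t, exists l, P t -> Un_cv (fun n => h n t) l).
  { intros t; destruct (classic (P t)) as [Ht|Ht]; [|exists 0; tauto].
    assert (Hct : Cauchy_crit (fun n => h n t)).
    { intros eps Heps; destruct (Hc eps Heps) as [N HN].
      exists N; intros n m Hn Hm; apply HN; auto. }
    destruct (R_complete _ Hct) as [l Hl]; exists l; auto. }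
  destruct (functional_choice _ Hlim) as [g Hg].
  exists g; intros eps Heps.
  destruct (Hc (eps / 2)) as [N HN]; [lra|].
  exists N; intros n t Hn Ht.
  destruct (Hg t Ht (eps / 2)) as [M HM]; [lra|].
  specialize (HM (max N M) ltac:(lia)); unfold R_dist in HM.
  specialize (HN n (max N M) t Hn ltac:(lia) Ht).
  replace (h n t - g t) with ((h n t - h (max N M) t) + (h (max N M) t - g t)) by ring.
  eapply Rle_lt_trans; [apply Rabs_triang|]; lra.
Qed.

End UniformConvergence.

Section MeanValue.

Variables a b x0 : R.
Hypothesis Hx0 : in_I a b x0.

Lemma MVT_in_I (u u' : R -> R) (e t : R) :
  (forall x, in_I a b x -> derivable_pt_lim u x (u' x)) ->
  (forall x, in_I a b x -> Rabs (u' x) <= e) ->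
  in_I a b t -> Rabs (u t - u x0) <= e * (b - a).
Proof.
  intros Hd He Ht.
  assert (Hbetween : forall c, Rmin x0 t <= c <= Rmax x0 t -> in_I a b c).
  { unfold in_I, Rmin, Rmax in *; intros c Hc; destruct (Rle_dec x0 t); lra. }
  destruct (MVT_abs u u' x0 t) as [c [Hc Hcb]]; [auto|].
  rewrite Hc.
  assert (Hdist : Rabs (t - x0) < b - a) by (unfold in_I in *; apply Rabs_def1; lra).
  pose proof (He c (Hbetween c Hcb)); pose proof (Rabs_pos (u' c));
    pose proof (Rabs_pos (t - x0)); nra.
Qed.

Lemma unif_cauchy_on_of_derivs (h d : nat -> R -> R) :
  (forall n x, in_I a b x -> derivable_pt_lim (h n) x (d n x)) ->
  (forall n, h n x0 = h O x0) ->
  unif_cauchy_on (in_I a b) d -> unif_cauchy_on (in_I a b) h.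
Proof.
  intros Hd H0 Hc eps Heps.
  assert (Hba : 0 < b - a) by (unfold in_I in Hx0; lra).
  destruct (Hc (eps / (2 * (b - a)))) as [N HN].
  { apply Rdiv_lt_0_compat; lra. }
  exists N; intros n m t Hn Hm Ht.
  assert (Hmvt : Rabs ((h n t - h m t) - (h n x0 - h m x0)) <= eps / (2 * (b - a)) * (b - a)).
  { apply (MVT_in_I (fun x => h n x - h m x) (fun x => d n x - d m x)); auto.
    - intros x Hx; apply derivable_pt_lim_minus; auto.
    - intros x Hx; left; auto. }
  rewrite (H0 n), (H0 m), Rminus_diag, Rminus_0_r in Hmvt.
  replace (eps / (2 * (b - a)) * (b - a)) with (eps / 2) in Hmvt by (field; lra).
  lra.
Qed.

Lemma unif_cv_on_const_of_derivs (h d : nat -> R -> R) (c : R) :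
  (forall n x, in_I a b x -> derivable_pt_lim (h n) x (d n x)) ->
  (forall n, h n x0 = c) ->
  unif_cv_on d (fun _ => 0) (in_I a b) -> unif_cv_on h (fun _ => c) (in_I a b).
Proof.
  intros Hd H0 Hcv eps Heps.
  assert (Hba : 0 < b - a) by (unfold in_I in Hx0; lra).
  destruct (Hcv (eps / (2 * (b - a)))) as [N HN].
  { apply Rdiv_lt_0_compat; lra. }
  exists N; intros n t Hn Ht.
  assert (Hmvt : Rabs (h n t - h n x0) <= eps / (2 * (b - a)) * (b - a)).
  { apply (MVT_in_I (h n) (d n)); auto.
    intros x Hx; left; specialize (HN n x Hn Hx); rewrite Rminus_0_r in HN; exact HN. }
  rewrite H0 in Hmvt.
  replace (eps / (2 * (b - a)) * (b - a)) with (eps / 2) in Hmvt by (field; lra).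
  lra.
Qed.

End MeanValue.

Lemma derivable_pt_lim_unif_cv (a b : R) (h d : nat -> R -> R) (g D : R -> R) (t : R) :
  (forall n x, in_I a b x -> derivable_pt_lim (h n) x (d n x)) ->
  (forall n x, in_I a b x -> continuity_pt (d n) x) ->
  unif_cv_on h g (in_I a b) -> unif_cv_on d D (in_I a b) ->
  in_I a b t -> derivable_pt_lim g t (D t).
Proof.
  intros Hd Hcont Hh HD Ht.
  assert (Hr : 0 < (b - a) / 2) by (unfold in_I in Ht; lra).
  assert (Hball : forall y, Boule ((a + b) / 2) (mkposreal _ Hr) y <-> in_I a b y).
  { intros y; unfold Boule, in_I; simpl; split; intro Hy.
    - apply Rabs_def2 in Hy; lra.
    - apply Rabs_def1; lra. }
  assert (HCVU : CVU d D ((a + b) / 2) (mkposreal _ Hr)).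
  { intros eps Heps; destruct (HD eps Heps) as [N HN].
    exists N; intros n y Hn Hy; rewrite Rabs_minus_sym; apply HN; [lia|apply Hball; auto]. }
  apply (derivable_pt_lim_CVU h d g D t _ _ (proj2 (Hball t) Ht)).
  - intros y n Hy; apply Hd, Hball; auto.
  - intros y Hy; apply (unif_cv_on_pointwise (in_I a b)); auto; apply Hball; auto.
  - exact HCVU.
  - apply (CVU_continuity _ _ _ _ HCVU); intros n y Hy; apply Hcont, Hball; auto.
Qed.

Lemma derivable_pt_lim_scal_pow_mult (c : R) (m : nat) (G : R -> R) (t l : R) :
  derivable_pt_lim G t l ->
  derivable_pt_lim (fun x => c * x ^ m * G x) t
    (c * (INR m * t ^ pred m) * G t + c * t ^ m * l).
Proof.
  intros HG.
  exact (derivable_pt_lim_mult _ _ t _ _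
           (derivable_pt_lim_scal _ c t _ (derivable_pt_lim_pow t m)) HG).
Qed.

Lemma hat_partial_at_0 (F : nat -> R -> R) (N : nat) : hat_partial F N 0 = F O 0.
Proof.
  induction N as [|N IH]; unfold hat_partial in *; simpl sum_f_R0.
  - simpl; field.
  - rewrite IH; simpl pow; ring.
Qed.

Lemma f_kn_succ_at_0 (F : nat -> R -> R) (k n : nat) : f_kn F k (S n) 0 = 0.
Proof. unfold f_kn; simpl; ring. Qed.

Section Derivatives.

Variables (a b : R) (F : nat -> R -> R).
Hypothesis HF : forall n t, in_I a b t -> derivable_pt_lim (F n) t (F (S n) t).

Lemma continuity_pt_f_kn (k n : nat) (t : R) : in_I a b t -> continuity_pt (f_kn F k n) t.
Proof.
  intros Ht; apply derivable_continuous_pt; eexists.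
  apply derivable_pt_lim_scal_pow_mult, HF, Ht.
Qed.

Lemma derivable_pt_lim_f_kn_succ (k n : nat) (t : R) : in_I a b t ->
  derivable_pt_lim (f_kn F k (S n)) t (f_kn F (S k) (S n) t - f_kn F (S k) n t).
Proof.
  intros Ht.
  assert (Hd := derivable_pt_lim_scal_pow_mult ((-1) ^ S n / INR (fact (S n))) (S n)
                  (F (S n + k)%nat) t _ (HF _ t Ht)).
  replace (f_kn F (S k) (S n) t - f_kn F (S k) n t)
    with ((-1) ^ S n / INR (fact (S n)) * (INR (S n) * t ^ pred (S n)) * F (S n + k)%nat t
          + (-1) ^ S n / INR (fact (S n)) * t ^ S n * F (S (S n + k)) t).
  { exact Hd. }
  unfold f_kn; simpl pred.
  replace (S (S n + k)) with (S n + S k)%nat by lia.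
  replace (S n + k)%nat with (n + S k)%nat by lia.
  rewrite fact_simpl, mult_INR, S_INR.
  pose proof (INR_fact_neq_0 n); pose proof (pos_INR n).
  simpl pow; field; lra.
Qed.

Lemma derivable_pt_lim_hat_partial (N : nat) (t : R) : in_I a b t ->
  derivable_pt_lim (hat_partial F N) t (f_kn F 1 N t).
Proof.
  intros Ht; induction N as [|N IH].
  - assert (Hd := derivable_pt_lim_scal_pow_mult ((-1) ^ 0 / INR (fact 0)) 0 (F O) t _
                    (HF O t Ht)).
    replace (f_kn F 1 0 t) with
      ((-1) ^ 0 / INR (fact 0) * (INR 0 * t ^ pred 0) * F O t
       + (-1) ^ 0 / INR (fact 0) * t ^ 0 * F 1%nat t) by (unfold f_kn; simpl; field).
    exact Hd.
  - change (hat_partial F (S N)) with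
      (plus_fct (hat_partial F N)
         (fun x => (-1) ^ S N / INR (fact (S N)) * x ^ S N * F (S N) x)).
    assert (Hd := derivable_pt_lim_plus _ _ t _ _ IH
                    (derivable_pt_lim_scal_pow_mult ((-1) ^ S N / INR (fact (S N))) (S N)
                       (F (S N)) t _ (HF _ t Ht))).
    replace (f_kn F 1 (S N) t) with
      (f_kn F 1 N t + ((-1) ^ S N / INR (fact (S N)) * (INR (S N) * t ^ pred (S N)) * F (S N) t
                       + (-1) ^ S N / INR (fact (S N)) * t ^ S N * F (S (S N)) t)).
    { exact Hd. }
    unfold f_kn; rewrite !Nat.add_1_r; simpl pred.
    rewrite fact_simpl, mult_INR, S_INR.
    pose proof (INR_fact_neq_0 N); pose proof (pos_INR N).
    simpl pow; field; lra.
Qed.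

End Derivatives.

Section Coefficients.

Variables (a b : R) (F : nat -> R -> R).
Hypothesis H0 : in_I a b 0.
Hypothesis HF : forall n t, in_I a b t -> derivable_pt_lim (F n) t (F (S n) t).

Lemma f_kn_unif_cv_0_of_succ (k : nat) :
  (exists g, unif_cv_on (f_kn F (S k)) g (in_I a b)) ->
  unif_cv_on (f_kn F k) (fun _ => 0) (in_I a b).
Proof.
  intros [g Hg]; apply unif_cv_on_of_succ.
  apply (unif_cv_on_const_of_derivs a b 0 H0 _
           (fun n t => f_kn F (S k) (S n) t - f_kn F (S k) n t)).
  - intros n x Hx; apply (derivable_pt_lim_f_kn_succ a b); auto.
  - intros n; apply f_kn_succ_at_0.
  - exact (unif_cv_on_succ_sub _ _ _ Hg).
Qed.

Lemma f_kn_unif_cv_0_below (j k : nat) : (j < k)%nat ->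
  (exists g, unif_cv_on (f_kn F k) g (in_I a b)) ->
  unif_cv_on (f_kn F j) (fun _ => 0) (in_I a b).
Proof.
  induction k as [|k IH]; intros Hjk Hk; [lia|].
  destruct (Nat.eq_dec j k) as [->|Hne].
  - apply f_kn_unif_cv_0_of_succ, Hk.
  - apply IH; [lia|].
    exists (fun _ => 0); apply f_kn_unif_cv_0_of_succ, Hk.
Qed.

Lemma hat_partial_unif_cv (fcheck : R -> R) :
  unif_cv_on (f_kn F 1) fcheck (in_I a b) ->
  exists S, unif_cv_on (hat_partial F) S (in_I a b) /\
            forall t, in_I a b t -> derivable_pt_lim S t (fcheck t).
Proof.
  intros Hc.
  assert (Hd : forall N t, in_I a b t ->
                 derivable_pt_lim (hat_partial F N) t (f_kn F 1 N t)).
  { intros; apply (derivable_pt_lim_hat_partial a b); auto. }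
  destruct (unif_cauchy_on_cv (in_I a b) (hat_partial F)) as [S HS].
  { apply (unif_cauchy_on_of_derivs a b 0 H0 _ (f_kn F 1) Hd).
    - intros N; rewrite !hat_partial_at_0; reflexivity.
    - exact (unif_cv_on_cauchy _ _ _ Hc). }
  exists S; split; [exact HS|].
  intros t Ht; apply (derivable_pt_lim_unif_cv a b _ (f_kn F 1) _ _ _ Hd); auto.
  intros N x Hx; apply (continuity_pt_f_kn a b); auto.
Qed.

Lemma hat_partial_unif_cv_const :
  unif_cv_on (f_kn F 1) (fun _ => 0) (in_I a b) ->
  unif_cv_on (hat_partial F) (fun _ => F O 0) (in_I a b).
Proof.
  apply (unif_cv_on_const_of_derivs a b 0 H0).
  - intros; apply (derivable_pt_lim_hat_partial a b); auto.
  - apply hat_partial_at_0.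
Qed.

End Coefficients.

Theorem theorem2 (a b : R) (f : R -> R) (F : nat -> R -> R) (k : nat)
  (Ha : a < 0) (Hb : 0 < b)
  (HF : higher_derivs a b f F)
  (Hk : (1 <= k)%nat)
  (Hcv : exists g : R -> R, unif_cv_on (fun n => f_kn F k n) g (in_I a b)) :
  ((2 <= k)%nat ->
     exists S : R -> R,
       unif_cv_on (hat_partial F) S (in_I a b) /\
       (forall t, in_I a b t -> S t = f 0)) /\
  (k = 1%nat ->
     forall fcheck : R -> R,
       unif_cv_on (fun n => f_kn F 1 n) fcheck (in_I a b) ->
       exists S : R -> R,
         unif_cv_on (hat_partial F) S (in_I a b) /\
         (forall t, in_I a b t -> derivable_pt_lim S t (fcheck t)) /\
         ((forall t, in_I a b t -> fcheck t = 0) ->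
            forall t, in_I a b t -> S t = f 0)).
Proof.
  destruct HF as [HF0 HFS].
  assert (H0 : in_I a b 0) by (unfold in_I; lra).
  assert (Hconst : unif_cv_on (f_kn F 1) (fun _ => 0) (in_I a b) ->
                   unif_cv_on (hat_partial F) (fun _ => f 0) (in_I a b)).
  { rewrite <- HF0; exact (hat_partial_unif_cv_const a b F H0 HFS). }
  split.
  - intros Hk2; exists (fun _ => f 0); split; [|reflexivity].
    apply Hconst, (f_kn_unif_cv_0_below a b F H0 HFS 1 k); auto.
  - intros _ fcheck Hc.
    destruct (hat_partial_unif_cv a b F H0 HFS fcheck Hc) as [S [HS HdS]].
    exists S; split; [exact HS|split; [exact HdS|]].
    intros Hz t Ht.
    apply (unif_cv_on_unique _ (hat_partial F) S (fun _ => f 0) t HS); auto.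
    apply Hconst, (unif_cv_on_ext _ _ fcheck); auto.
Qed.
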